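(* Let $(X,d)$ be a compact metric space with $\dim X=0$ and let $f\in\mathcal{H}(X)$ be equicontinuous. Then $f$ has the continuous shadowing property.
   Context: $\mathcal{H}(X)$ is the set of homeomorphisms of $X$. $f$ is equicontinuous if for every $\epsilon>0$ there is $\delta>0$ such that $d(x,y)\le\delta$ implies $\sup_{i\in\mathbb{Z}}d(f^i(x),f^i(y))\le\epsilon$. On $X^{\mathbb{Z}}$ use the metric $\tilde d(x,y)=\sup_{i\in\mathbb{Z}}2^{-|i|}d(x_i,y_i)$. For $\delta>0$, $P(f,\delta)\subset X^{\mathbb{Z}}$ is the set of bi-infinite $\delta$-pseudo orbits, i.e. sequences $(x_i)_{i\in\mathbb{Z}}$ with $d(f(x_i),x_{i+1})\le\delta$ for all $i\in\mathbb{Z}$. $f$ has the continuous shadowing property if for every $\epsilon>0$ there are $\delta>0$ and a continuous map $r:P(f,\delta)\to X$ with $d(f^i(r(x)),x_i)\le\epsilon$ for all $x=(x_i)_{i\in\mathbb{Z}}\in P(f,\delta)$ and all $i\in\mathbb{Z}$. *)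

From Stdlib Require Import Reals Lra Lia ZArith List.
Open Scope R_scope.

Section MS.
Variable M : Metric_Space.
Local Notation X := (Base M).
Local Notation d := (dist M).

Definition is_open (U : X -> Prop) : Prop :=
  forall x, U x -> exists r, r > 0 /\ forall y, d x y < r -> U y.

Definition compact_space : Prop :=
  forall (I : Type) (U : I -> X -> Prop),
    (forall i, is_open (U i)) ->
    (forall x, exists i, U i x) ->
    exists l : list I, forall x, exists i, In i l /\ U i x.

(** Covering dimension 0 (dim X = 0): X is nonempty and every finite open
    cover has a finite open refinement covering X consisting of pairwise
    disjoint sets (i.e. of order 0). *)
Definition dim_zero : Prop :=
  inhabited X /\
  forall l : list (X -> Prop),
    (forall U, In U l -> is_open U) ->
    (forall x, exists U, In U l /\ U x) ->
    exists m : list (X -> Prop),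
      (forall V, In V m -> is_open V) /\
      (forall x, exists V, In V m /\ V x) /\
      (forall V, In V m -> exists U, In U l /\ forall x, V x -> U x) /\
      (forall i j V W, nth_error m i = Some V -> nth_error m j = Some W ->
         i <> j -> forall x, ~ (V x /\ W x)).

Definition continuous_map (f : X -> X) : Prop :=
  forall x eps, eps > 0 -> exists del, del > 0 /\
    forall y, d x y < del -> d (f x) (f y) < eps.

Definition homeomorphism (f g : X -> X) : Prop :=
  (forall x, g (f x) = x) /\ (forall x, f (g x) = x) /\
  continuous_map f /\ continuous_map g.

Definition zit (f g : X -> X) (i : Z) (x : X) : X :=
  match i with
  | Z0 => x
  | Zpos p => Nat.iter (Pos.to_nat p) f x
  | Zneg p => Nat.iter (Pos.to_nat p) g x
  end.

Definition equicontinuous (f g : X -> X) : Prop :=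
  forall eps, eps > 0 -> exists del, del > 0 /\
    forall x y, d x y <= del -> forall i : Z, d (zit f g i x) (zit f g i y) <= eps.

Definition pseudo_orbit (f : X -> X) (del : R) (x : Z -> X) : Prop :=
  forall i : Z, d (f (x i)) (x (i + 1)%Z) <= del.

(** [tdist_le x y e] : the metric  sup_i 2^{-|i|} d(x_i,y_i)  on X^Z is <= e. *)
Definition tdist_le (x y : Z -> X) (e : R) : Prop :=
  forall i : Z, / (2 ^ Z.abs_nat i) * d (x i) (y i) <= e.

Definition continuous_shadowing (f g : X -> X) : Prop :=
  forall eps, eps > 0 -> exists del, del > 0 /\
    exists r : {x : Z -> X | pseudo_orbit f del x} -> X,
      (forall x e, e > 0 -> exists eta, eta > 0 /\
         forall y, tdist_le (proj1_sig x) (proj1_sig y) eta -> d (r x) (r y) <= e) /\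
      (forall x i, d (zit f g i (r x)) (proj1_sig x i) <= eps).

End MS.

(* Since dim X = 0 and X is compact, X splits into finitely many pairwise
   disjoint open sets of diameter at most eps; being in the same piece is an
   equivalence relation E, and points closer than a Lebesgue number lam of the
   partition are E-related.  Equicontinuity turns d(a, b) <= del into
   E(f^i a, f^i b) for all i, so along a del-pseudo orbit f^n(x_k) and x_(k+n)
   stay E-related by induction on n, in both time directions.  Hence the
   pseudo orbit is eps-shadowed by the orbit of its own point x_0, and
   x |-> x_0 is trivially continuous. *)
From Stdlib Require Import Reals ZArith List Lra Lia RelationClasses.
Open Scope R_scope.

Lemma finite_min_pos {A : Type} (h : A -> R) (l : list A) :
  (forall a, h a > 0) -> exists lam, lam > 0 /\ forall a, In a l -> lam <= h a.
Proof.
  intros Hpos. induction l as [|b l [lam [Hlam Hle]]].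
  - exists 1. split; [lra | intros a []].
  - exists (Rmin (h b) lam). split; [apply Rmin_pos; [apply Hpos | exact Hlam]|].
    intros a [<- | Ha].
    + apply Rmin_l.
    + eapply Rle_trans; [apply Rmin_r | exact (Hle a Ha)].
Qed.

Section Partition.
Variable M : Metric_Space.
Local Notation X := (Base M).
Local Notation d := (dist M).

Lemma ball_open (c : X) (r : R) : is_open M (fun y => d c y < r).
Proof.
  intros x Hx. exists (r - d c x). split; [lra|].
  intros y Hy. pose proof (dist_tri M c y x). lra.
Qed.

Lemma dist_self (x : X) : d x x = 0.
Proof. exact (proj2 (dist_refl M x x) eq_refl). Qed.

Lemma lebesgue_number (I : Type) (U : I -> X -> Prop) :
  compact_space M -> (forall i, is_open M (U i)) -> (forall x, exists i, U i x) ->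
  exists lam, lam > 0 /\ forall x, exists i, forall y, d x y < lam -> U i y.
Proof.
  intros Hc Hopen Hcov.
  set (J := {c : X & {r : R | r > 0 /\ exists i, forall y, d c y < r -> U i y}}).
  set (rad := fun j : J => proj1_sig (projT2 j)).
  destruct (Hc J (fun j y => d (projT1 j) y < rad j / 2)) as [l Hl].
  { intros; apply ball_open. }
  { intros x. destruct (Hcov x) as [i Hi]. destruct (Hopen i x Hi) as [r [Hr Hball]].
    exists (existT _ x (exist _ r (conj Hr (ex_intro _ i Hball)))).
    unfold rad; simpl. rewrite dist_self. lra. }
  assert (Hrad : forall j, rad j / 2 > 0).
  { intros j. pose proof (proj1 (proj2_sig (projT2 j))). unfold rad. lra. }
  destruct (finite_min_pos (fun j => rad j / 2) l Hrad) as [lam [Hlam Hle]].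
  exists lam. split; [exact Hlam|].
  intros x. destruct (Hl x) as [j [Hj Hjx]]. specialize (Hle j Hj).
  unfold rad in *. destruct j as [c [r [Hr [i Hball]]]]. simpl in *.
  exists i. intros y Hy. apply Hball. pose proof (dist_tri M c y x). lra.
Qed.

Lemma fine_open_partition (eps : R) :
  compact_space M -> dim_zero M -> eps > 0 ->
  exists m : list (X -> Prop),
    (forall V, In V m -> is_open M V) /\
    (forall x, exists V, In V m /\ V x) /\
    (forall V a b, In V m -> V a -> V b -> d a b <= eps) /\
    (forall i j V W, nth_error m i = Some V -> nth_error m j = Some W ->
       i <> j -> forall x, ~ (V x /\ W x)).
Proof.
  intros Hc [_ Hd] He.
  set (ball := fun c y => d c y < eps / 2).
  destruct (Hc X ball) as [l Hl].
  { intros; apply ball_open. }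
  { intros x. exists x. unfold ball. rewrite dist_self. lra. }
  destruct (Hd (map ball l)) as [m [Hopen [Hcov [Href Hdisj]]]].
  { intros U HU. apply in_map_iff in HU. destruct HU as [c [<- _]]. apply ball_open. }
  { intros x. destruct (Hl x) as [c [Hcl Hcx]].
    exists (ball c). split; [apply in_map_iff; exists c; auto | exact Hcx]. }
  exists m. repeat split; auto.
  intros V a b HV Ha Hb. destruct (Href V HV) as [U [HU HVU]].
  apply in_map_iff in HU. destruct HU as [c [<- _]].
  pose proof (HVU a Ha). pose proof (HVU b Hb). unfold ball in *.
  pose proof (dist_tri M a b c). rewrite (dist_sym M a c) in *. lra.
Qed.

Definition same_piece (m : list (X -> Prop)) (a b : X) : Prop :=
  exists V, In V m /\ V a /\ V b.

Lemma same_piece_equivalence (m : list (X -> Prop)) :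
  (forall x, exists V, In V m /\ V x) ->
  (forall i j V W, nth_error m i = Some V -> nth_error m j = Some W ->
     i <> j -> forall x, ~ (V x /\ W x)) ->
  Equivalence (same_piece m).
Proof.
  intros Hcov Hdisj. split.
  - intros a. destruct (Hcov a) as [V [HV Ha]]. exists V. auto.
  - intros a b [V [HV [Ha Hb]]]. exists V. auto.
  - intros a b c [V [HV [Ha Hb]]] [W [HW [Hb' Hc]]].
    apply In_nth_error in HV as [i Hi]. apply In_nth_error in HW as [j Hj].
    destruct (Nat.eq_dec i j) as [<- | Hij].
    + rewrite Hi in Hj. injection Hj as <-. exists V. eauto using nth_error_In.
    + exfalso. exact (Hdisj i j V W Hi Hj Hij b (conj Hb Hb')).
Qed.

Lemma fine_clopen_equivalence (eps : R) :
  compact_space M -> dim_zero M -> eps > 0 ->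
  exists E : X -> X -> Prop, Equivalence E /\
    (forall a b, E a b -> d a b <= eps) /\
    exists lam, lam > 0 /\ forall a b, d a b < lam -> E a b.
Proof.
  intros Hc Hd He.
  destruct (fine_open_partition eps Hc Hd He) as [m [Hopen [Hcov [Hdiam Hdisj]]]].
  exists (same_piece m). split; [exact (same_piece_equivalence m Hcov Hdisj)|].
  split.
  { intros a b [V [HV [Ha Hb]]]. exact (Hdiam V a b HV Ha Hb). }
  destruct (lebesgue_number {V | In V m} (@proj1_sig _ _) Hc) as [lam [Hlam Hleb]].
  { intros [V HV]. exact (Hopen V HV). }
  { intros x. destruct (Hcov x) as [V [HV Hx]]. exists (exist _ V HV). exact Hx. }
  exists lam. split; [exact Hlam|].
  intros a b Hab. destruct (Hleb a) as [[V HV] Hball]. simpl in Hball.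
  exists V. split; [exact HV|]. split; apply Hball; [rewrite dist_self; lra | exact Hab].
Qed.

End Partition.

Lemma zit_of_nat (M : Metric_Space) (f g : Base M -> Base M) (n : nat) (a : Base M) :
  zit M f g (Z.of_nat n) a = Nat.iter n f a.
Proof.
  destruct n; simpl; [reflexivity|]. rewrite SuccNat2Pos.id_succ. reflexivity.
Qed.

Lemma zit_neg_succ (M : Metric_Space) (f g : Base M -> Base M) (n : nat) (a : Base M) :
  zit M f g (Z.neg (Pos.of_succ_nat n)) a = Nat.iter n g (g a).
Proof. simpl. rewrite SuccNat2Pos.id_succ. apply Nat.iter_succ_r. Qed.

Section Shadowing.
Variable M : Metric_Space.
Local Notation X := (Base M).
Variables (f g : X -> X) (E : X -> X -> Prop) (del : R) (x : Z -> X).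
Hypothesis g_f : forall a, g (f a) = a.
Hypothesis E_equiv : Equivalence E.
Hypothesis E_iterates :
  forall a b, dist M a b <= del -> forall i, E (zit M f g i a) (zit M f g i b).
Hypothesis x_pseudo : pseudo_orbit M f del x.

Lemma pseudo_orbit_forward (n : nat) (k : Z) :
  E (Nat.iter n f (x k)) (x (k + Z.of_nat n)%Z).
Proof.
  revert k. induction n as [|n IH]; intros k.
  - rewrite Z.add_0_r. reflexivity.
  - pose proof (E_iterates _ _ (x_pseudo k) (Z.of_nat n)) as Hstep.
    rewrite !zit_of_nat in Hstep. rewrite (Nat.iter_succ_r n _ f).
    etransitivity; [exact Hstep|].
    rewrite Nat2Z.inj_succ, <- Z.add_1_l, Z.add_assoc. apply IH.
Qed.

Lemma pseudo_orbit_backward (n : nat) (k : Z) :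
  E (x (k - Z.of_nat n)%Z) (Nat.iter n g (x k)).
Proof.
  revert k. induction n as [|n IH]; intros k.
  - rewrite Z.sub_0_r. reflexivity.
  - pose proof (E_iterates _ _ (x_pseudo (k - 1)%Z) (Z.neg (Pos.of_succ_nat n))) as Hstep.
    rewrite !zit_neg_succ, g_f in Hstep.
    replace (k - 1 + 1)%Z with k in Hstep by lia. rewrite (Nat.iter_succ_r n _ g).
    etransitivity; [|exact Hstep].
    rewrite Nat2Z.inj_succ, <- Z.add_1_l, Z.sub_add_distr. apply IH.
Qed.

Lemma pseudo_orbit_follows_orbit (i : Z) : E (zit M f g i (x 0%Z)) (x i).
Proof.
  destruct i as [|p|p]; simpl.
  - reflexivity.
  - pose proof (pseudo_orbit_forward (Pos.to_nat p) 0) as H.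
    rewrite positive_nat_Z in H. exact H.
  - symmetry. pose proof (pseudo_orbit_backward (Pos.to_nat p) 0) as H.
    rewrite positive_nat_Z in H. exact H.
Qed.

End Shadowing.

Lemma tdist_le_at_0 (M : Metric_Space) (x y : Z -> Base M) (e : R) :
  tdist_le M x y e -> dist M (x 0%Z) (y 0%Z) <= e.
Proof. intros H. specialize (H 0%Z). simpl in H. rewrite Rinv_1, Rmult_1_l in H. exact H. Qed.

Theorem lemma3p2 (M : Metric_Space) (f g : Base M -> Base M) :
  compact_space M -> dim_zero M -> homeomorphism M f g ->
  equicontinuous M f g -> continuous_shadowing M f g.
Proof.
  intros Hc Hd [g_f _] Hequi eps Heps.
  destruct (fine_clopen_equivalence M eps Hc Hd Heps)
    as [E [E_equiv [E_diam [lam [Hlam E_near]]]]].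
  destruct (Hequi (lam / 2)) as [del [Hdel Hclose]]; [lra|].
  assert (E_iterates : forall a b, dist M a b <= del ->
            forall i, E (zit M f g i a) (zit M f g i b)).
  { intros a b Hab i. apply E_near. pose proof (Hclose a b Hab i). lra. }
  exists del. split; [exact Hdel|].
  exists (fun x => proj1_sig x 0%Z). split.
  - intros x e He. exists e. split; [exact He|].
    intros y Hy. exact (tdist_le_at_0 M _ _ e Hy).
  - intros [x Hx] i. simpl. apply E_diam.
    exact (pseudo_orbit_follows_orbit M f g E del x g_f E_equiv E_iterates Hx i).
Qed.
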